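(* Let $\hat a,\hat b,\hat c,\hat d\in\hat{\mathbb Q}$ and suppose there exists $\hat q\in\hat{\mathbb U}$ such that $\hat a\hat q=\hat q\hat b$ and $\hat c\hat q=\hat q\hat d$. Suppose $\hat a=\hat x^*\hat\lambda\hat x$ and $\hat b=\hat y^*\hat\lambda\hat y$, where $\hat x,\hat y\in\hat{\mathbb U}$, $\hat\lambda\in\mathbb{DC}$ and the standard part of $\hat\lambda$ is not a real number. Write $\hat x\hat c\hat x^*=c_1+c_2 j+(c_3+c_4 j)\varepsilon$ and $\hat y\hat d\hat y^*=d_1+d_2 j+(d_3+d_4 j)\varepsilon$ with $c_t,d_t\in\mathbb C$. If $c_2\neq0$, then there are exactly two unit dual quaternions $\hat q$ satisfying both equations, they differ only by sign, and they are $$\hat q=\pm\,\hat x^*\Big(\overline{\sqrt{\tfrac{d_2}{c_2}}}+\frac{\overline{c_2d_4}-\overline{d_2c_4}}{2\,\overline{c_2}^{\,2}}\,\overline{\sqrt{\tfrac{c_2}{d_2}}}\,\varepsilon\Big)\hat y.$$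
   Context: $\mathbb{Q}$ denotes the real quaternions with units $i,j,k$; complex numbers are identified with quaternions $a+bi$, so every quaternion is uniquely $z_1+z_2 j$ with $z_1,z_2\in\mathbb C$. $\varepsilon$ satisfies $\varepsilon\ne0$, $\varepsilon^2=0$ and commutes with quaternions. $\hat{\mathbb Q}$ is the set of dual quaternions $\tilde p_{st}+\tilde p_{\mathcal I}\varepsilon$ ($\tilde p_{st}$ the standard part), with conjugate $\hat p^*=\tilde p_{st}^*+\tilde p_{\mathcal I}^*\varepsilon$. $\mathbb{DC}$ is the set of dual complex numbers $a+b\varepsilon$, $a,b\in\mathbb C$. $\hat{\mathbb U}$ is the set of unit dual quaternions, i.e. $\hat p$ with $|\hat p|=1$, where $|\hat p|=|\tilde p_{st}|+\frac{\mathrm{sc}(\tilde p_{st}^*\tilde p_{\mathcal I})}{|\tilde p_{st}|}\varepsilon$ for $\tilde p_{st}\ne0$, $\mathrm{sc}(\tilde p)=\frac12(\tilde p+\tilde p^* )$; equivalently $\hat p^*\hat p=\hat p\hat p^*=1$. In the formula, $\sqrt{d_2/c_2}$ is a complex square root and $\sqrt{c_2/d_2}$ denotes its reciprocal; bars denote complex conjugation. *)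

(* Real quaternions over an arbitrary real closed field R
   (e.g. the reals), modelled via the Cayley-Dickson decomposition
   q = z1 + z2 j with z1, z2 in C = R[i] (the complex numbers over R). *)
From HB Require Import structures.
From mathcomp Require Import all_boot all_order all_algebra.
From mathcomp Require Import complex.
Set Implicit Arguments.
Unset Strict Implicit.
Unset Printing Implicit Defensive.
Import Order.TTheory GRing.Theory Num.Theory.
Local Open Scope ring_scope.

Section Quat.
Variable R : rcfType.
Local Notation C := (R[i]).

Record quat := Quat { qc1 : C; qc2 : C }.

Definition qadd (p q : quat) := Quat (qc1 p + qc1 q) (qc2 p + qc2 q).
Definition qopp (p : quat) := Quat (- qc1 p) (- qc2 p).
(* (z1 + z2 j)(w1 + w2 j) = (z1 w1 - z2 conj w2) + (z1 w2 + z2 conj w1) j,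
   using j w = (conj w) j and j^2 = -1 *)
Definition qmul (p q : quat) :=
  Quat (qc1 p * qc1 q - qc2 p * Num.conj (qc2 q))
       (qc1 p * qc2 q + qc2 p * Num.conj (qc1 q)).
Definition qconj (p : quat) := Quat (Num.conj (qc1 p)) (- qc2 p).
Definition qzero := Quat 0 0.
Definition qone := Quat 1 0.
Definition qofC (z : C) := Quat z 0.

(* dual quaternion  st + inf * eps *)
Record dquat := DQuat { dst : quat; dinf : quat }.

Definition dqadd (p q : dquat) := DQuat (qadd (dst p) (dst q)) (qadd (dinf p) (dinf q)).
Definition dqopp (p : dquat) := DQuat (qopp (dst p)) (qopp (dinf p)).
(* eps^2 = 0, eps commutes with quaternions *)
Definition dqmul (p q : dquat) :=
  DQuat (qmul (dst p) (dst q))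
        (qadd (qmul (dst p) (dinf q)) (qmul (dinf p) (dst q))).
Definition dqconj (p : dquat) := DQuat (qconj (dst p)) (qconj (dinf p)).
Definition dqone := DQuat qone qzero.

Definition dqofDC (a b : C) := DQuat (qofC a) (qofC b).

Definition dq_unit (p : dquat) : Prop :=
  dqmul (dqconj p) p = dqone /\ dqmul p (dqconj p) = dqone.

End Quat.

From Pilot Require Import Defs.
From HB Require Import structures.
From mathcomp Require Import all_boot all_order all_algebra.
From mathcomp Require Import complex ring.
Import Order.TTheory GRing.Theory Num.Theory.
Local Open Scope ring_scope.

(* Put p := x q y^*.  Then a q = q b and c q = q d become lam p = p lam and
   (x c x^* ) p = p (y d y^* ), and p is again a unit.  As the standard part of
   lam is not real, commuting with lam kills the j-components of p, so
   p = u + v eps is dual complex with u^* u = 1 and u^* v + v^* u = 0.  The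
   j-components of the second equation read c2 u^* = u d2 and
   c2 v^* + c4 u^* = u d4 + v d2: the first forces u^2 = (d2 / c2)^*, i.e.
   u = +- (sqrt (d2 / c2))^*, and the second then determines v linearly.  The
   two candidates differ by a sign, and since some solution exists, both are. *)

Section TwistedEquations.
Set Implicit Arguments.
Unset Strict Implicit.
Variable R : rcfType.
Local Notation C := (R[i]).

(* Rewriting with the generic [rmorphD] etc. would expose the canonical
   morphism instance instead of [Num.conj], which [conjCK] no longer matches. *)
Lemma conjCD (a b : C) : (a + b)^* = a^* + b^*. Proof. exact: rmorphD. Qed.
Lemma conjCN (a : C) : (- a)^* = - a^*. Proof. exact: rmorphN. Qed.
Lemma conjCM (a b : C) : (a * b)^* = a^* * b^*. Proof. exact: rmorphM. Qed.
Lemma conjCV (a : C) : (a^-1)^* = (a^*)^-1. Proof. exact: fmorphV. Qed.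

Lemma nonreal_commute_eq0 (l z : C) : l \notin Num.real -> l * z = z * l^* -> z = 0.
Proof.
move=> nonreal_l lz; have l_neq_conj : l - l^* != 0 by rewrite subr_eq0 eq_sym -CrealE.
by apply: (mulIf l_neq_conj); rewrite mul0r mulrBr -lz mulrC subrr.
Qed.

Lemma twisted_unit_sqr (c2 d2 u : C) : c2 != 0 ->
  u^* * u = 1 -> c2 * u^* = u * d2 -> u ^+ 2 = d2^* / c2^*.
Proof.
move=> c2_neq0 uu c2u; have := congr1 Num.conj c2u.
rewrite !conjCM conjCK => c2u'.
have c2'_neq0 : c2^* != 0 by rewrite conjC_eq0.
apply: (mulfI c2'_neq0).
by rewrite [RHS]mulrCA mulfV // mulr1 expr2 mulrA c2u' mulrAC uu mul1r.
Qed.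

Lemma twisted_dual_part (c2 c4 d2 d4 u v : C) : c2 != 0 ->
  u^* * u = 1 -> u^* * v + v^* * u = 0 ->
  c2 * u^* = u * d2 -> c2 * v^* + c4 * u^* = u * d4 + v * d2 ->
  v = ((c2 * d4)^* - (d2 * c4)^*) / (2 * c2^* ^+ 2) * u^*.
Proof.
move=> c2_neq0 uu uv0 c2u c4u.
have u_neq0 : u != 0 by apply: contra_eq_neq uu => ->; rewrite mulr0 eq_sym oner_eq0.
have u' : u^* = u^-1 by rewrite (mulr1_eq (_ : u * u^* = 1)) // mulrC.
have c2'_neq0 : c2^* != 0 by rewrite conjC_eq0.
have d2' : d2^* = c2^* * u ^+ 2.
  by rewrite (twisted_unit_sqr c2_neq0 uu c2u) mulrCA mulfV // mulr1.
have vu : v^* * u = - (u^* * v) by apply/eqP; rewrite -addr_eq0 addrC uv0.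
have v' : v^* = - (u^* * v) * u^* by rewrite -vu -mulrA [u * _]mulrC uu mulr1.
(* This makes the conjugate of the second equation linear in [v]. *)
have vd2 : v^* * d2^* = - (c2^* * v) by rewrite v' d2' u'; field.
have c4u' : c2^* * v + c4^* * u = u^-1 * d4^* + - (c2^* * v).
  by move: (congr1 Num.conj c4u); rewrite !(conjCD, conjCM, conjCK) vd2 u'.
apply/eqP; rewrite -subr_eq0 !conjCM d2' u'; apply/eqP.
transitivity ((c2^* * v + c4^* * u - (u^-1 * d4^* + - (c2^* * v))) / (2 * c2^*)).
  by field; rewrite ?pnatr_eq0 ?c2'_neq0.
by rewrite c4u' subrr mul0r.
Qed.

Lemma twisted_unit_solutions (c2 c4 d2 d4 u v : C) : c2 != 0 ->
  u^* * u = 1 -> u^* * v + v^* * u = 0 ->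
  c2 * u^* = u * d2 -> c2 * v^* + c4 * u^* = u * d4 + v * d2 ->
  let s := sqrtC (d2 / c2) in
  let v0 := ((c2 * d4)^* - (d2 * c4)^*) / (2 * c2^* ^+ 2) * (s^-1)^* in
  (u = s^* /\ v = v0) \/ (u = - s^* /\ v = - v0).
Proof.
move=> c2_neq0 uu uv0 c2u c4u s v0.
have u_inv : u^-1 = u^* by apply: mulr1_eq; rewrite mulrC.
have v_eq := twisted_dual_part c2_neq0 uu uv0 c2u c4u.
have u_sqr : u ^+ 2 = s^* ^+ 2.
  by rewrite (twisted_unit_sqr c2_neq0 uu c2u) expr2 -conjCM -expr2 sqrtCK conjCM conjCV.
rewrite /v0 conjCV; move/eqP: u_sqr; rewrite eqf_sqr => /orP[/eqP u_s | /eqP u_Ns].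
  by left; split; rewrite // -u_s u_inv.
have -> : s^* = - u by rewrite u_Ns opprK.
by right; rewrite opprK; split; rewrite // invrN u_inv mulrN opprK.
Qed.

End TwistedEquations.

Section DualQuaternions.
Set Implicit Arguments.
Unset Strict Implicit.
Variable R : rcfType.
Local Notation C := (R[i]).
Local Notation dquat := (dquat R).

Ltac dq_ring :=
  repeat match goal with p : Defs.dquat _ |- _ => destruct p end;
  repeat match goal with p : quat _ |- _ => destruct p end;
  rewrite /dqmul /dqconj /dqopp /dqone /qmul /qconj /qadd /qopp /qone /qzero /=;
  congr (DQuat (Quat _ _) (Quat _ _));
  rewrite ?(conjCD, conjCN, conjCM, conjCK); ring.

Lemma dqmulA (p q r : dquat) : dqmul p (dqmul q r) = dqmul (dqmul p q) r.
Proof. dq_ring. Qed.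

Lemma dqmul1l (p : dquat) : dqmul (dqone R) p = p.
Proof. dq_ring. Qed.

Lemma dqmul1r (p : dquat) : dqmul p (dqone R) = p.
Proof. dq_ring. Qed.

Lemma dqmulNl (p q : dquat) : dqmul (dqopp p) q = dqopp (dqmul p q).
Proof. dq_ring. Qed.

Lemma dqmulNr (p q : dquat) : dqmul p (dqopp q) = dqopp (dqmul p q).
Proof. dq_ring. Qed.

Lemma dqoppK (p : dquat) : dqopp (dqopp p) = p.
Proof. dq_ring. Qed.

Lemma dqconjK (p : dquat) : dqconj (dqconj p) = p.
Proof. dq_ring. Qed.

Lemma dqconjN (p : dquat) : dqconj (dqopp p) = dqopp (dqconj p).
Proof. dq_ring. Qed.

Lemma dqconjM (p q : dquat) : dqconj (dqmul p q) = dqmul (dqconj q) (dqconj p).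
Proof. dq_ring. Qed.

Lemma dq_unit_conj (p : dquat) : dq_unit p -> dq_unit (dqconj p).
Proof. by case=> pV Vp; split; rewrite dqconjK. Qed.

Lemma dq_unitM (p q : dquat) : dq_unit p -> dq_unit q -> dq_unit (dqmul p q).
Proof.
case=> pV Vp [qV Vq]; split; rewrite dqconjM.
  by rewrite -dqmulA (dqmulA (dqconj p)) pV dqmul1l.
by rewrite -dqmulA (dqmulA q) Vq dqmul1l.
Qed.

Lemma dq_unitN (p : dquat) : dq_unit p -> dq_unit (dqopp p).
Proof. by case=> pV Vp; split; rewrite dqconjN dqmulNl dqmulNr dqoppK. Qed.

Lemma dq_unit_neq_opp (q : dquat) : dq_unit q -> q <> dqopp q.
Proof.
case: q => [[z1 z2] [z3 z4]] [qV _] [/eqP + /eqP + _ _].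
rewrite !(eq_sym _ (- _)) !eqNr => /eqP z1_0 /eqP z2_0.
move: qV; rewrite z1_0 z2_0 /dqmul /dqconj /qmul /qconj /dqone /qone /= => -[].
by rewrite !(rmorph0, oppr0, mul0r, subrr) => /eqP; rewrite eq_sym oner_eq0.
Qed.

Lemma dqmulVK (x p : dquat) : dq_unit x -> dqmul (dqmul p (dqconj x)) x = p.
Proof. by case=> xV _; rewrite -dqmulA xV dqmul1r. Qed.

Lemma dqmulKV (x p : dquat) : dq_unit x -> dqmul (dqmul p x) (dqconj x) = p.
Proof. by case=> _ Vx; rewrite -dqmulA Vx dqmul1r. Qed.

Lemma dq_transportK (x y q : dquat) : dq_unit x -> dq_unit y ->
  dqmul (dqmul (dqconj x) (dqmul (dqmul x q) (dqconj y))) y = q.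
Proof. by move=> Ux Uy; rewrite !dqmulA dqmulVK // Ux.1 dqmul1l. Qed.

Lemma dq_conjugateK (x p : dquat) : dq_unit x ->
  dqmul (dqmul x (dqmul (dqmul (dqconj x) p) x)) (dqconj x) = p.
Proof. by move=> Ux; rewrite !dqmulA dqmulKV // Ux.2 dqmul1l. Qed.

Lemma dq_transport_intertwine (x y a b q : dquat) : dq_unit x -> dq_unit y ->
  dqmul a q = dqmul q b ->
  dqmul (dqmul (dqmul x a) (dqconj x)) (dqmul (dqmul x q) (dqconj y)) =
  dqmul (dqmul (dqmul x q) (dqconj y)) (dqmul (dqmul y b) (dqconj y)).
Proof.
by move=> Ux Uy abq; rewrite !dqmulA !dqmulVK // -(dqmulA x a) abq dqmulA.
Qed.

Lemma commute_nonreal_dual_complex (l li : C) (p : dquat) : l \notin Num.real ->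
  dqmul (dqofDC l li) p = dqmul p (dqofDC l li) ->
  p = dqofDC (qc1 (dst p)) (qc1 (dinf p)).
Proof.
case: p => [[z1 z2] [z3 z4]] nonreal_l.
rewrite /dqmul /dqofDC /qofC /qmul /qadd /= => -[_ z2_comm _ z4_comm].
rewrite !(rmorph0, mul0r, mulr0, addr0, add0r, subr0) in z2_comm z4_comm.
have z2_0 := nonreal_commute_eq0 nonreal_l z2_comm.
rewrite z2_0 mulr0 mul0r add0r addr0 in z4_comm.
by rewrite z2_0 (nonreal_commute_eq0 nonreal_l z4_comm).
Qed.

Lemma dq_unit_dual_complex (u v : C) :
  dq_unit (dqofDC u v) -> u^* * u = 1 /\ u^* * v + v^* * u = 0.
Proof.
case; rewrite /dqmul /dqconj /dqofDC /qofC /qconj /qmul /qadd /= => -[] + _ + _ _.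
by rewrite !(rmorph0, oppr0, mul0r, mulr0, addr0, add0r, subr0).
Qed.

Lemma intertwine_dual_complex (P Q : dquat) (u v : C) :
  dqmul P (dqofDC u v) = dqmul (dqofDC u v) Q ->
  qc2 (dst P) * u^* = u * qc2 (dst Q) /\
  qc2 (dst P) * v^* + qc2 (dinf P) * u^* = u * qc2 (dinf Q) + v * qc2 (dst Q).
Proof.
case: P Q => [[k1 k2] [k3 k4]] [[e1 e2] [e3 e4]].
rewrite /dqmul /dqofDC /qofC /qmul /qadd /= => -[_ + _].
by rewrite !(rmorph0, oppr0, mul0r, mulr0, addr0, add0r, subr0).
Qed.

Lemma nonreal_intertwine_solutions (l li : C) (P Q p : dquat) :
  l \notin Num.real -> qc2 (dst P) != 0 -> dq_unit p ->
  dqmul (dqofDC l li) p = dqmul p (dqofDC l li) -> dqmul P p = dqmul p Q ->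
  let c2 := qc2 (dst P) in let c4 := qc2 (dinf P) in
  let d2 := qc2 (dst Q) in let d4 := qc2 (dinf Q) in
  let s := sqrtC (d2 / c2) in
  let p0 := dqofDC s^* (((c2 * d4)^* - (d2 * c4)^*) / (2 * c2^* ^+ 2) * (s^-1)^*) in
  p = p0 \/ p = dqopp p0.
Proof.
move=> nonreal_l c2_neq0 Up lp Pp c2 c4 d2 d4 s p0.
move: Up Pp; rewrite (commute_nonreal_dual_complex nonreal_l lp).
move=> /dq_unit_dual_complex[uu uv0] /intertwine_dual_complex[c2u c4u].
have [[-> ->] | [-> ->]] := twisted_unit_solutions c2_neq0 uu uv0 c2u c4u.
  by left.
by right; rewrite /dqopp /dqofDC /qopp /qofC /= oppr0.
Qed.

Definition unit_intertwiner (a b c d q : dquat) : Prop :=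
  dq_unit q /\ dqmul a q = dqmul q b /\ dqmul c q = dqmul q d.

Lemma unit_intertwinerN (a b c d q : dquat) :
  unit_intertwiner a b c d q -> unit_intertwiner a b c d (dqopp q).
Proof.
case=> Uq [abq cdq]; split; first exact: dq_unitN.
by rewrite !dqmulNl !dqmulNr abq cdq.
Qed.

Lemma solutions_opp_pair (P : dquat -> Prop) (q0 : dquat) :
  (forall q, P q -> P (dqopp q)) -> (forall q, P q -> q <> dqopp q) ->
  (exists q, P q) -> (forall q, P q -> q = q0 \/ q = dqopp q0) ->
  q0 <> dqopp q0 /\ (forall q, P q <-> q = q0 \/ q = dqopp q0).
Proof.
move=> PN P_neq_opp [q1 Pq1] P_pm.
have Pq0 : P q0.
  by case: (P_pm _ Pq1) => q1E; [rewrite -q1E | rewrite -(dqoppK q0) -q1E; apply: PN].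
split; first exact: P_neq_opp.
by move=> q; split; [exact: P_pm | case=> ->; last apply: PN].
Qed.

End DualQuaternions.

Theorem theorem3p1 (R : rcfType) (a b c d x y : dquat R) (lam_st lam_inf : R[i]) :
  (exists q : dquat R, dq_unit q /\ dqmul a q = dqmul q b /\ dqmul c q = dqmul q d) ->
  dq_unit x -> dq_unit y ->
  lam_st \notin Num.real ->
  a = dqmul (dqmul (dqconj x) (dqofDC lam_st lam_inf)) x ->
  b = dqmul (dqmul (dqconj y) (dqofDC lam_st lam_inf)) y ->
  let c1 := qc1 (dst (dqmul (dqmul x c) (dqconj x))) in
  let c2 := qc2 (dst (dqmul (dqmul x c) (dqconj x))) in
  let c3 := qc1 (dinf (dqmul (dqmul x c) (dqconj x))) in
  let c4 := qc2 (dinf (dqmul (dqmul x c) (dqconj x))) in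
  let d1 := qc1 (dst (dqmul (dqmul y d) (dqconj y))) in
  let d2 := qc2 (dst (dqmul (dqmul y d) (dqconj y))) in
  let d3 := qc1 (dinf (dqmul (dqmul y d) (dqconj y))) in
  let d4 := qc2 (dinf (dqmul (dqmul y d) (dqconj y))) in
  c2 != 0 ->
  let s := sqrtC (d2 / c2) in
  let q0 := dqmul (dqmul (dqconj x)
              (dqofDC (Num.conj s)
                 ((Num.conj (c2 * d4) - Num.conj (d2 * c4))
                    / (2 * Num.conj c2 ^+ 2) * Num.conj (s^-1)))) y in
  q0 <> dqopp q0 /\
  (forall q : dquat R,
     (dq_unit q /\ dqmul a q = dqmul q b /\ dqmul c q = dqmul q d) <->
     (q = q0 \/ q = dqopp q0)).
Proof.
move=> sol_exists Ux Uy nonreal_lam aE bE c1 c2 c3 c4 d1 d2 d3 d4 c2_neq0 s q0.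
apply: (@solutions_opp_pair _ (unit_intertwiner a b c d)).
- exact: unit_intertwinerN.
- by move=> q [Uq _]; apply: dq_unit_neq_opp.
- exact: sol_exists.
move=> q [Uq [abq cdq]].
have Up := dq_unitM (dq_unitM Ux Uq) (dq_unit_conj Uy).
have := dq_transport_intertwine Ux Uy abq.
rewrite aE bE !dq_conjugateK // => lam_p.
have cdp := dq_transport_intertwine Ux Uy cdq.
rewrite -(dq_transportK q Ux Uy).
have [-> | ->] := nonreal_intertwine_solutions nonreal_lam c2_neq0 Up lam_p cdp.
  left; reflexivity.
right; rewrite dqmulNr dqmulNl; reflexivity.
Qed.
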